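(* Let $n,m,T\in\mathbb{N}$, $u_{[0,T]}\in\mathbb{R}^{m(T+1)}$, and let $(A,B)\in\mathbb{R}^{n\times n}\times\mathbb{R}^{n\times m}$ be controllable. If $u_{[0,T-1]}$ is persistently exciting of order $n$, then the matrix $\mathcal{H}_1(x_{[0,T]})=\begin{bmatrix}x(0)&\cdots&x(T)\end{bmatrix}$ has full row rank $n$ for every state sequence $x_{[0,T]}$ satisfying $x(t+1)=Ax(t)+Bu(t)$ for all $t\in[0,T-1]$.
   Context: For $v:\mathbb{Z}_+\to\mathbb{R}^q$, $v_{[0,T-1]}=\begin{bmatrix}v(0)^\top & \cdots & v(T-1)^\top\end{bmatrix}^\top$. For $k\in[1,T]$ the Hankel matrix of depth $k$ is the $qk\times(T-k+1)$ block matrix $\mathcal{H}_k(v_{[0,T-1]})$ whose $(i,j)$ block ($i\in[0,k-1]$, $j\in[0,T-k]$) is $v(i+j)$. The sequence $v_{[0,T-1]}$ is persistently exciting of order $k$ if $k\le T$ and $\mathcal{H}_k(v_{[0,T-1]})$ has full row rank. *)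

From mathcomp Require Import all_boot all_order all_algebra.
Set Implicit Arguments. Unset Strict Implicit. Unset Printing Implicit Defensive.
Import Order.TTheory GRing.Theory Num.Theory.
Local Open Scope ring_scope.

Lemma mod_ord_proof (k q : nat) (r : 'I_(k * q)) : (r %% q < q)%N.
Proof.
case: q r => [|q] r; last by rewrite ltn_mod.
by case: r => r; rewrite muln0.
Qed.

Definition mod_ord (k q : nat) (r : 'I_(k * q)) : 'I_q := Ordinal (mod_ord_proof r).

(* Hankel matrix of depth k of v_[0,T-1] (v : nat -> R^q as column vectors):
   the (qk) x (T-k+1) block matrix whose (i,j) block is v(i+j).
   Row index r corresponds to block i = r %/ q and component r %% q. *)
Definition hankel (R : nzRingType) (q : nat) (k : nat) (v : nat -> 'cV[R]_q) (T : nat)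
  : 'M[R]_(k * q, T - k + 1) :=
  \matrix_(r < k * q, j < T - k + 1) v (r %/ q + j)%N (mod_ord r) ord0.

Definition persistently_exciting (R : fieldType) (q : nat) (k : nat)
  (v : nat -> 'cV[R]_q) (T : nat) : Prop :=
  (k <= T)%N /\ row_free (hankel k v T).

(* Kalman controllability matrix [B  AB  ...  A^(n-1) B] : n x (n m). *)
Definition ctrb_mx (R : nzRingType) (n m : nat) (A : 'M[R]_n) (B : 'M[R]_(n, m))
  : 'M[R]_(n, n * m) :=
  \matrix_(i < n, c < n * m) (A ^+ (c %/ m) *m B) i (mod_ord c).

Definition controllable (R : fieldType) (n m : nat) (A : 'M[R]_n) (B : 'M[R]_(n, m))
  : Prop := \rank (ctrb_mx A B) = n.

From mathcomp Require Import all_boot all_order all_algebra.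
From mathcomp Require Import zify.
Set Implicit Arguments. Unset Strict Implicit. Unset Printing Implicit Defensive.
Import GRing.Theory.
Local Open Scope ring_scope.

(* If a row vector xi annihilates every state x(0), ..., x(T), filter the
   trajectory by the characteristic polynomial p of A: by Cayley-Hamilton the
   state term p(A) x(t) vanishes, and sum_l p_l x(t + l) becomes a combination
   of the inputs u(t), ..., u(t + n - 1) with coefficients q_i(A) B, where
   q_i = drop_poly i.+1 p are the Horner tails of p.  Hence the row blocks
   xi q_i(A) B annihilate the depth-n Hankel matrix of u and vanish by
   persistency of excitation.  As p is monic, q_(n-1-j)(A) is A^j plus lower
   powers of A, so xi A^j B = 0 for all j < n and controllability gives xi = 0. *)

Section BlockIndex.

Variables k q : nat.

Lemma block_ord_proof (i : 'I_k) (c : 'I_q) : (i * q + c < k * q)%N.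
Proof. by case: i c => i ik [c cq] /=; nia. Qed.

Definition block_ord (i : 'I_k) (c : 'I_q) : 'I_(k * q) :=
  Ordinal (block_ord_proof i c).

Lemma div_ord_proof (r : 'I_(k * q)) : (r %/ q < k)%N.
Proof.
by case: q r => [|q'] [r /= rkq]; [rewrite muln0 in rkq | rewrite ltn_divLR].
Qed.

Definition div_ord (r : 'I_(k * q)) : 'I_k := Ordinal (div_ord_proof r).

Lemma block_ord_div i c : (block_ord i c %/ q)%N = i.
Proof.
by case: c => c cq /=; rewrite divnMDl ?divn_small ?addn0 //; case: q cq.
Qed.

Lemma div_block_ord i c : div_ord (block_ord i c) = i.
Proof. exact/val_inj/block_ord_div. Qed.

Lemma mod_block_ord i c : mod_ord (block_ord i c) = c.
Proof. by apply: val_inj; case: c => c cq /=; rewrite modnMDl modn_small. Qed.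

Lemma block_ordK (r : 'I_(k * q)) : block_ord (div_ord r) (mod_ord r) = r.
Proof. by apply: val_inj; rewrite /= -divn_eq. Qed.

Lemma sum_block_ord (V : nmodType) (F : 'I_(k * q) -> V) :
  \sum_(r < k * q) F r = \sum_(i < k) \sum_(c < q) F (block_ord i c).
Proof.
rewrite pair_big /= (reindex (fun r => (div_ord r, mod_ord r))) /=.
  by apply: eq_bigr => r _; rewrite block_ordK.
exists (fun ic : 'I_k * 'I_q => block_ord ic.1 ic.2) => [r _ | [i c] _] /=.
  exact: block_ordK.
by rewrite div_block_ord mod_block_ord.
Qed.

End BlockIndex.

Section RowBlocks.

Variables (R : nzRingType) (k q : nat).

Definition row_concat (f : 'I_k -> 'rV[R]_q) : 'rV[R]_(k * q) :=
  \row_r f (div_ord r) 0 (mod_ord r).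

Definition row_block (v : 'rV[R]_(k * q)) (i : 'I_k) : 'rV[R]_q :=
  \row_c v 0 (block_ord i c).

Lemma row_blockK (v : 'rV[R]_(k * q)) : row_concat (row_block v) = v.
Proof. by apply/rowP => r; rewrite !mxE block_ordK. Qed.

Lemma row_concat_eq0 (f : 'I_k -> 'rV[R]_q) i : row_concat f = 0 -> f i = 0.
Proof.
move=> /rowP f0; apply/rowP => c; have := f0 (block_ord i c).
by rewrite !mxE div_block_ord mod_block_ord.
Qed.

Lemma row_concat_hankel (f : 'I_k -> 'rV[R]_q) (w : nat -> 'cV[R]_q) T j :
  (row_concat f *m hankel k w T) 0 j = (\sum_(i < k) f i *m w (i + j)%N) 0 0.
Proof.
rewrite mxE sum_block_ord summxE; apply: eq_bigr => i _.
rewrite mxE; apply: eq_bigr => c _.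
by rewrite !mxE block_ord_div div_block_ord mod_block_ord.
Qed.

End RowBlocks.

Lemma drop_poly_drop (R : nzSemiRingType) i j (p : {poly R}) :
  drop_poly i (drop_poly j p) = drop_poly (i + j) p.
Proof. by apply/polyP => l; rewrite !coef_drop_poly addnA. Qed.

Lemma drop_poly1E (R : nzRingType) (p : {poly R}) :
  p = drop_poly 1 p * 'X + (p`_0)%:P.
Proof.
apply/polyP => -[|l]; rewrite coefD coefMX coefC /=; first by rewrite add0r.
by rewrite coef_drop_poly addn1 addr0.
Qed.

Section LinearSystem.

Variables (R : comNzRingType) (n' m : nat).
Local Notation n := n'.+1.
Variables (A : 'M[R]_n) (B : 'M[R]_(n, m)).

Lemma horner_mx_sum (p : {poly R}) :
  horner_mx A p = \sum_(l < size p) p`_l *: A ^+ l.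
Proof.
rewrite -{1}[p]coefK poly_def rmorph_sum; apply: eq_bigr => l _.
rewrite -mul_polyC rmorphM rmorphXn /= horner_mx_C horner_mx_X.
by rewrite -scalemx1 -scalerAl mul1r.
Qed.

Lemma drop_poly_powers_eq0 (xi : 'rV[R]_n) (p : {poly R}) N :
  p \is monic -> size p = N.+1 ->
  (forall i, (i < N)%N -> xi *m horner_mx A (drop_poly i.+1 p) *m B = 0) ->
  forall j, (j < N)%N -> xi *m A ^+ j *m B = 0.
Proof.
move=> /monicP lead_p size_p tails0; elim/ltn_ind => j IHj jN.
set q := drop_poly (N - j) p.
have size_q : size q = j.+1.
  by rewrite size_drop_poly size_p subSn ?leq_subr // subKn ?(ltnW jN).
have lead_q : q`_j = 1.
  by rewrite coef_drop_poly subnKC ?(ltnW jN) // -lead_p lead_coefE size_p.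
have /tails0 : (N - j.+1 < N)%N by lia.
rewrite subnSK // -/q horner_mx_sum size_q big_ord_recr /= lead_q scale1r.
rewrite mulmxDr mulmxDl mulmx_sumr mulmx_suml big1 ?add0r // => l _.
by rewrite -scalemxAr -scalemxAl IHj ?scaler0 // (ltn_trans _ jN).
Qed.

Variables (T : nat) (u : nat -> 'cV[R]_m) (x : nat -> 'cV[R]_n).
Hypothesis x_dyn : forall t, (t < T)%N -> x t.+1 = A *m x t + B *m u t.

Lemma horner_trajectory N (p : {poly R}) t :
  (size p <= N.+1)%N -> (t + N <= T)%N ->
  \sum_(l < N.+1) p`_l *: x (t + l)%N =
  horner_mx A p *m x t +
  \sum_(i < N) horner_mx A (drop_poly i.+1 p) *m B *m u (t + i)%N.
Proof.
elim: N p t => [|N IH] p t sp tN.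
  rewrite big_ord1 big_ord0 addr0 addn0 {2}(size1_polyC sp).
  by rewrite horner_mx_C mul_scalar_mx.
set q := drop_poly 1 p.
have sq : (size q <= N.+1)%N by rewrite size_drop_poly; lia.
have coef_q l : p`_l.+1 = q`_l by rewrite coef_drop_poly addn1.
rewrite big_ord_recl addn0.
under eq_bigr => i _ do rewrite lift0 -addSnnS coef_q.
rewrite IH // ?addSnnS // x_dyn; last lia.
rewrite [in RHS]big_ord_recl addn0.
under [in RHS]eq_bigr => i _ do
  rewrite lift0 -addSnnS -(addn1 i.+1) -drop_poly_drop.
rewrite {2}[p]drop_poly1E rmorphD rmorphM /= horner_mx_X horner_mx_C -/q.
rewrite mulmxDr mulmxDl mul_scalar_mx -mulmxE !mulmxA.
by rewrite !addrA (addrC (p`_0 *: x t)).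
Qed.

End LinearSystem.

Lemma controllable_rV_eq0 (R : fieldType) n m (A : 'M[R]_n) (B : 'M[R]_(n, m))
    (xi : 'rV[R]_n) :
  controllable A B -> (forall j, (j < n)%N -> xi *m A ^+ j *m B = 0) -> xi = 0.
Proof.
move=> ctrbA powers0.
have ctrb_free : row_free (ctrb_mx A B) by rewrite /row_free ctrbA.
apply/eqP; rewrite -(mulmx_free_eq0 _ ctrb_free); apply/eqP/rowP => c.
rewrite [RHS]mxE mxE.
have := powers0 _ (div_ord_proof c).
move=> /(congr1 (fun M : 'rV_m => M 0 (mod_ord c))).
rewrite /= -mulmxA [RHS]mxE mxE => powers0_c; rewrite -[RHS]powers0_c.
by apply: eq_bigr => i _; rewrite mxE.
Qed.

Section PersistentExcitation.

Variables (R : fieldType) (n' m T : nat).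
Local Notation n := n'.+1.
Variables (A : 'M[R]_n) (B : 'M[R]_(n, m)).
Variables (u : nat -> 'cV[R]_m) (x : nat -> 'cV[R]_n).
Hypotheses (ctrbA : controllable A B) (pe_u : persistently_exciting n u T).
Hypothesis x_dyn : forall t, (t < T)%N -> x t.+1 = A *m x t + B *m u t.

Lemma state_annihilator_eq0 (xi : 'rV[R]_n) :
  (forall t, (t <= T)%N -> xi *m x t = 0) -> xi = 0.
Proof.
move=> xi_x; case: pe_u => nT u_free.
pose tail_B i := xi *m horner_mx A (drop_poly i.+1 (char_poly A)) *m B.
have tails_hankel : row_concat (fun i : 'I_n => tail_B i) *m hankel n u T = 0.
  apply/rowP => j; rewrite row_concat_hankel mxE.
  have jT : (j + n <= T)%N by case: j => j /=; lia.
  have := horner_trajectory x_dyn (eq_leq (size_char_poly A)) jT.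
  rewrite Cayley_Hamilton mul0mx add0r => /(congr1 (mulmx xi)).
  rewrite !mulmx_sumr big1 => [/(congr1 (fun M : 'M_1 => M 0 0))|l _]; last first.
    by rewrite -scalemxAr xi_x ?scaler0 //; case: l => l /=; lia.
  rewrite [LHS]mxE => sum0; rewrite [RHS]sum0 !summxE.
  by apply: eq_bigr => i _; rewrite /tail_B !mulmxA addnC.
have tails_concat0 : row_concat (fun i : 'I_n => tail_B i) = 0.
  by apply/eqP; rewrite -(mulmx_free_eq0 _ u_free) tails_hankel.
have tails0 i (ltin : (i < n)%N) : tail_B i = 0.
  exact: row_concat_eq0 (Ordinal ltin) tails_concat0.
apply: (controllable_rV_eq0 ctrbA).
exact: drop_poly_powers_eq0 (char_poly_monic A) (size_char_poly A) tails0.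
Qed.

End PersistentExcitation.

Unset Implicit Arguments.

Theorem proposition2 (R : realFieldType) (n m T : nat)
  (u : nat -> 'cV[R]_m) (A : 'M[R]_n) (B : 'M[R]_(n, m)) :
  controllable A B ->
  persistently_exciting n u T ->
  forall x : nat -> 'cV[R]_n,
    (forall t : nat, (t < T)%N -> x t.+1 = A *m x t + B *m u t) ->
    row_free (hankel 1 x T.+1).
Proof.
move=> ctrbA pe_u x x_dyn; apply: inj_row_free => v vH.
case: n => [|n'] in A B ctrbA pe_u x x_dyn v vH *.
  exact: thinmx0.
have xi_x t : (t <= T)%N -> row_block v ord0 *m x t = 0.
  move=> tT; have tT' : (t < T.+1 - 1 + 1)%N by lia.
  have := congr1 (fun M : 'rV_(T.+1 - 1 + 1) => M 0 (Ordinal tT')) vH.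
  rewrite /= -{1}(row_blockK v) row_concat_hankel big_ord1 add0n [RHS]mxE => xt0.
  by apply/matrixP => i j; rewrite !ord1 xt0 mxE.
have xi0 := state_annihilator_eq0 ctrbA pe_u x_dyn xi_x.
by apply/rowP => r; rewrite -(row_blockK v) mxE (ord1 (div_ord r)) xi0 !mxE.
Qed.
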